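(* Let $N$ be a finite nonempty set, $p\notin N$ and $N'=N\cup\{p\}$. Let $\mathscr{C}^1\neq\mathscr{C}^2$ be minimal balanced collections on $N$ with balancing weights $\lambda^{\mathscr{C}^1},\lambda^{\mathscr{C}^2}$, and let $\mathscr{C}=\mathscr{C}^1\cup\mathscr{C}^2=\{S_1,\dots,S_k\}$. Assume that the $n\times k$ matrix $A^{\mathscr{C}}$ with columns $\mathbf{1}^{S_1},\dots,\mathbf{1}^{S_k}$ has rank $k-1$. Define $\mu,\nu\in\mathbb{R}^{\mathscr{C}}$ by $\mu_S=\lambda^{\mathscr{C}^1}_S$ if $S\in\mathscr{C}^1$ and $\mu_S=0$ otherwise, and $\nu_S=\lambda^{\mathscr{C}^2}_S$ if $S\in\mathscr{C}^2$ and $\nu_S=0$ otherwise. Let $I\subseteq[k]$ be such that $\mu_I\neq\nu_I$ (where $\mu_I=\sum_{i\in I}\mu_{S_i}$, similarly $\nu_I$) and $$t^I=\frac{1-\mu_I}{\nu_I-\mu_I}\in\,]0,1[.$$ Then $\mathscr{C}'=\{S_i\cup\{p\}\mid i\in I\}\cup\{S_i\mid i\in[k]\setminus I\}$ is a minimal balanced collection on $N'$, with balancing weights $(1-t^I)\mu_{S_i}+t^I\nu_{S_i}$ for the set coming from $S_i$.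
   Context: For $T\subseteq N$, $\mathbf{1}^T\in\mathbb{R}^N$ denotes the characteristic vector of $T$; $n=|N|$. A collection $\mathscr{B}$ of nonempty subsets of a finite set $N$ is balanced if there exist positive weights $(\lambda_S)_{S\in\mathscr{B}}$ (balancing weights) with $\sum_{S\in\mathscr{B}}\lambda_S\mathbf{1}^S=\mathbf{1}^N$. A balanced collection is minimal if it contains no balanced proper subcollection; equivalently, its system of balancing weights is unique. $[k]=\{1,\dots,k\}$. *)

From HB Require Import structures.
From mathcomp Require Import all_boot all_order all_algebra.
From mathcomp Require Import reals.
Set Implicit Arguments. Unset Strict Implicit. Unset Printing Implicit Defensive.
Import Order.TTheory GRing.Theory Num.Theory.
Local Open Scope ring_scope.

Section Balanced.
Variables (R : realType) (T : finType).

Definition collection_on (N : {set T}) (C : {set {set T}}) : Prop :=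
  forall S, S \in C -> S != set0 /\ S \subset N.

Definition balancing_weights (N : {set T}) (C : {set {set T}})
    (lam : {set T} -> R) : Prop :=
  (forall S, S \in C -> 0 < lam S) /\
  (forall x : T, \sum_(S in C) lam S * (x \in S)%:R = (x \in N)%:R).

Definition balanced (N : {set T}) (C : {set {set T}}) : Prop :=
  collection_on N C /\ exists lam, balancing_weights N C lam.

Definition minimal_balanced (N : {set T}) (C : {set {set T}}) : Prop :=
  balanced N C /\ forall D : {set {set T}}, D \proper C -> ~ balanced N D.

Definition char_matrix (N : {set T}) (C : {set {set T}}) :
    'M[R]_(#|N|, #|C|) :=
  \matrix_(r < #|N|, i < #|C|)
     ((enum_val (A := mem N) r \in enum_val (A := mem C) i)%:R).

End Balanced.

From HB Require Import structures.
From mathcomp Require Import all_boot all_order all_algebra.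
From mathcomp Require Import reals.
From mathcomp Require Import ring lra.
Set Implicit Arguments. Unset Strict Implicit. Unset Printing Implicit Defensive.
Import Order.TTheory GRing.Theory Num.Theory.
Local Open Scope ring_scope.

(* The combination (1 - t) mu + t nu balances every x of N, because mu and nu
   both do, and t is chosen so that it also sums to 1 over the sets that
   received p; hence C' is balanced.  For minimality it suffices that these are
   the only balancing weights of C'.  Restricted to the rows of N, any balancing
   system r of C' solves the system of A^C, whose solutions form an affine line
   through mu and nu since A^C has corank one: r = mu + a (nu - mu).  The row of
   p then forces a = t. *)

Section BalancingEquations.
Variables (R : realType) (T : finType).
Implicit Types (N : {set T}) (C D : {set {set T}}) (lam : {set T} -> R).

Definition balances N C lam : Prop :=
  forall x, \sum_(X in C) lam X * (x \in X)%:R = (x \in N)%:R.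

Lemma sum_if_subset C D (f : {set T} -> R) : D \subset C ->
  \sum_(X in C) (if X \in D then f X else 0) = \sum_(X in D) f X.
Proof.
move=> DC; rewrite -big_mkcondr; apply: eq_bigl => X.
by rewrite andb_idl // => /(subsetP DC).
Qed.

Lemma balances_zero_extension N C D lam : D \subset C -> balances N D lam ->
  balances N C (fun X => if X \in D then lam X else 0).
Proof.
move=> DC balD x; rewrite -balD -(sum_if_subset _ DC).
by apply: eq_bigr => X _; case: ifP; rewrite ?mul0r.
Qed.

Lemma weights_of_injective N (I : finType) (S : I -> {set T}) (v : I -> R) :
  injective S -> (forall i, 0 < v i) ->
  (forall x, \sum_i v i * (x \in S i)%:R = (x \in N)%:R) ->
  exists w, balancing_weights N [set S i | i : I] w /\ forall i, w (S i) = v i.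
Proof.
move=> Sinj v_gt0 v_bal.
pose w X := \sum_i (if S i == X then v i else 0).
have wS j : w (S j) = v j.
  rewrite /w (bigD1 j) //= eqxx big1 ?addr0 // => i ij.
  by rewrite (inj_eq Sinj) (negbTE ij).
exists w; split=> //; split=> [_ /imsetP[i _ ->]|x]; first by rewrite wS.
rewrite big_imset; last by move=> i j _ _; apply: Sinj.
by rewrite -v_bal; apply: eq_bigr => i _; rewrite wS.
Qed.

Lemma minimal_balanced_of_unique_weights N C w :
  collection_on N C -> balancing_weights N C w ->
  (forall lam, balances N C lam -> {in C, lam =1 w}) ->
  minimal_balanced R N C.
Proof.
move=> colC [w_gt0 w_bal] uniq_w; split; first by split=> //; exists w.
move=> D /properP[DC [X XC XD]] [_ [rho [_ rho_bal]]].
have := uniq_w _ (balances_zero_extension DC rho_bal) X XC.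
by rewrite (negbTE XD) => /esym/eqP; rewrite (gt_eqF (w_gt0 X XC)).
Qed.

Lemma balances_enum_zero_extension N C D lam : D \subset C -> balances N D lam ->
  forall x, \sum_(i < #|C|) (if enum_val i \in D then lam (enum_val i) else 0)
                         * (x \in enum_val (A := mem C) i)%:R = (x \in N)%:R.
Proof.
move=> DC balD x; rewrite -(big_enum_val (fun X : {set T} =>
  (if X \in D then lam X else 0) * (x \in X)%:R)).
exact: balances_zero_extension DC balD x.
Qed.

Lemma mix_zero_extensions_gt0 C1 C2 lam1 lam2 (t : R) X :
  {in C1, forall Y, 0 < lam1 Y} -> {in C2, forall Y, 0 < lam2 Y} ->
  0 < t < 1 -> X \in C1 :|: C2 ->
  0 < (1 - t) * (if X \in C1 then lam1 X else 0)
      + t * (if X \in C2 then lam2 X else 0).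
Proof.
move=> lam1_gt0 lam2_gt0 /andP[t_gt0 t_lt1] /setUP[X1|X2].
  rewrite X1; have := lam1_gt0 X X1; case: ifP => [/lam2_gt0|_]; nra.
rewrite X2; have := lam2_gt0 X X2; case: ifP => [/lam1_gt0|_]; nra.
Qed.

End BalancingEquations.

Lemma kermx_corank1_line (F : fieldType) k n (B : 'M[F]_(k, n)) (d y : 'rV_k) :
  \rank B = (k - 1)%N -> d != 0 -> d *m B = 0 -> y *m B = 0 ->
  exists a, y = a *: d.
Proof.
move=> rkB d_neq0 dB yB.
have dK : (d <= kermx B)%MS by rewrite sub_kermx dB.
have yK : (y <= kermx B)%MS by rewrite sub_kermx yB.
have k_gt0 : (0 < k)%N by have := rank_leq_col d; rewrite rank_rV d_neq0.
have rkK : \rank (kermx B) = 1%N by rewrite mxrank_ker rkB subKn ?subn1 // -ltnS prednK.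
have /eqmxP dKE : (d == kermx B)%MS.
  by rewrite -(mxrank_leqif_eq dK).2 rkK rank_rV d_neq0.
by apply/sub_rVP; rewrite dKE.
Qed.

Lemma char_matrix_solutions_collinear (R : realType) (T : finType)
    (N : {set T}) (C : {set {set T}}) (mu nu r : 'I_#|C| -> R) :
  let S i := enum_val (A := mem C) i in
  \rank (char_matrix R N C) = (#|C| - 1)%N -> ~ mu =1 nu ->
  {in N, forall x, \sum_i mu i * (x \in S i)%:R = 1} ->
  {in N, forall x, \sum_i nu i * (x \in S i)%:R = 1} ->
  {in N, forall x, \sum_i r i * (x \in S i)%:R = 1} ->
  exists a, forall i, r i = mu i + a * (nu i - mu i).
Proof.
move=> S rkC mu_neq_nu mu_bal nu_bal r_bal.
pose B := (char_matrix R N C)^T.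
have kerB (f g : 'I_#|C| -> R) :
    {in N, forall x, \sum_i f i * (x \in S i)%:R = 1} ->
    {in N, forall x, \sum_i g i * (x \in S i)%:R = 1} ->
    \row_i (g i - f i) *m B = 0.
  move=> f_bal g_bal; apply/rowP => j; rewrite !mxE.
  under eq_bigr do rewrite !mxE mulrBl.
  by rewrite sumrB g_bal ?f_bal ?subrr // enum_valP.
have d_neq0 : \row_i (nu i - mu i) != 0.
  apply/eqP => /rowP d0; apply: mu_neq_nu => i.
  by apply/eqP; rewrite eq_sym -subr_eq0; have := d0 i; rewrite !mxE => ->.
have rkB : \rank B = (#|C| - 1)%N by rewrite mxrank_tr.
have [a ra] := kermx_corank1_line rkB d_neq0 (kerB _ _ mu_bal nu_bal)
  (kerB _ _ mu_bal r_bal).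
exists a => i; have /rowP/(_ i) := ra; rewrite !mxE => <-.
by rewrite addrC subrK.
Qed.

Section AdjoinPoint.
Variables (T : finType) (k : nat) (S : 'I_k -> {set T}) (p : T) (I : {set 'I_k}).
Hypothesis p_notin_S : forall i, p \notin S i.

Definition adjoin_point i := if i \in I then p |: S i else S i.

Lemma mem_adjoin_point x i :
  (x \in adjoin_point i) = if x == p then i \in I else x \in S i.
Proof.
rewrite /adjoin_point; have [->|xp] := eqVneq x p.
  by case: ifP; rewrite ?setU11 ?(negbTE (p_notin_S i)).
by case: ifP; rewrite // in_setU1 (negbTE xp).
Qed.

Lemma adjoin_point_inj : injective S -> injective adjoin_point.
Proof.
move=> Sinj i j /setP Eij; apply: Sinj; apply/setP => x.
have := Eij x; rewrite !mem_adjoin_point.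
by have [->|//] := eqVneq x p; rewrite (negbTE (p_notin_S i)) (negbTE (p_notin_S j)).
Qed.

Lemma sum_adjoin_point (R : nzRingType) (r : 'I_k -> R) x :
  \sum_i r i * (x \in adjoin_point i)%:R =
  if x == p then \sum_(i in I) r i else \sum_i r i * (x \in S i)%:R.
Proof.
under eq_bigr do rewrite mem_adjoin_point.
case: eqP => // _; rewrite [RHS]big_mkcond; apply: eq_bigr => i _.
by case: (i \in I); rewrite ?mulr1 ?mulr0.
Qed.

Lemma collection_on_adjoin_point (N : {set T}) :
  (forall i, S i != set0 /\ S i \subset N) ->
  collection_on (p |: N) [set adjoin_point i | i : 'I_k].
Proof.
move=> colS _ /imsetP[i _ ->]; have [S_neq0 S_sub] := colS i.
rewrite /adjoin_point; case: ifP => _.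
  by split; [apply/set0Pn; exists p; rewrite setU11 | rewrite setUS].
by split=> //; apply: subset_trans S_sub (subsetU1 p N).
Qed.

End AdjoinPoint.

Section LiftedWeights.
Variables (R : realType) (T : finType) (N : {set T}) (p : T).
Variables (C : {set {set T}}) (I : {set 'I_#|C|}) (mu nu : 'I_#|C| -> R).
Let S i := enum_val (A := mem C) i.
Let S' := adjoin_point S p I.
Hypotheses (p_notin_N : p \notin N) (S_sub_N : forall i, S i \subset N).
Hypothesis mu_bal : forall x, \sum_i mu i * (x \in S i)%:R = (x \in N)%:R.
Hypothesis nu_bal : forall x, \sum_i nu i * (x \in S i)%:R = (x \in N)%:R.
Let muI := \sum_(i in I) mu i.
Let nuI := \sum_(i in I) nu i.
Hypothesis muI_neq_nuI : muI != nuI.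
Let t : R := (1 - muI) / (nuI - muI).

Let p_notin_S i : p \notin S i.
Proof. by apply: contra p_notin_N; apply/subsetP. Qed.

(* [t] is exactly the mixing parameter that makes the new row of [p] sum to 1. *)
Lemma lifted_balances x :
  \sum_i ((1 - t) * mu i + t * nu i) * (x \in S' i)%:R = (x \in p |: N)%:R.
Proof.
rewrite sum_adjoin_point // in_setU1; case: eqP => _ /=.
  have nuI_muI_neq0 : nuI - muI != 0 by rewrite subr_eq0 eq_sym.
  rewrite big_split /= -!mulr_sumr -/muI -/nuI mulrBl mul1r addrAC -addrA -mulrBr.
  by rewrite divfK // addrC subrK.
under eq_bigr do rewrite mulrDl -mulrA -(mulrA t).
by rewrite big_split /= -!mulr_sumr mu_bal nu_bal -mulrDl subrK mul1r.
Qed.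

Hypothesis rankC : \rank (char_matrix R N C) = (#|C| - 1)%N.

Lemma lifted_balances_unique (r : 'I_#|C| -> R) :
  (forall x, \sum_i r i * (x \in S' i)%:R = (x \in p |: N)%:R) ->
  forall i, r i = (1 - t) * mu i + t * nu i.
Proof.
move=> r_bal.
have bal_N (f : 'I_#|C| -> R) : (forall x, \sum_i f i * (x \in S' i)%:R =
    (x \in p |: N)%:R) -> {in N, forall x, \sum_i f i * (x \in S i)%:R = 1}.
  move=> f_bal x xN; have xp : x != p by apply: contraNneq p_notin_N => <-.
  by have := f_bal x; rewrite sum_adjoin_point // (negbTE xp) setU1r.
have mu_neq_nu : ~ mu =1 nu.
  by move=> mu_nu; move/eqP: muI_neq_nuI; apply; apply: eq_bigr.
have on_N (f : 'I_#|C| -> R) :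
    (forall x, \sum_i f i * (x \in S i)%:R = (x \in N)%:R) ->
    {in N, forall x, \sum_i f i * (x \in S i)%:R = 1}.
  by move=> f_bal x xN; rewrite f_bal xN.
have [a r_line] := char_matrix_solutions_collinear rankC mu_neq_nu
  (on_N _ mu_bal) (on_N _ nu_bal) (bal_N _ r_bal).
have a_eq_t : a = t.
  have := r_bal p; rewrite sum_adjoin_point // eqxx setU11 mulr1n.
  under eq_bigr do rewrite r_line.
  rewrite big_split /= -mulr_sumr sumrB -/muI -/nuI => r_p.
  by rewrite /t -r_p [muI + _]addrC addrK mulfK // subr_eq0 eq_sym.
by move=> i; rewrite r_line a_eq_t; ring.
Qed.

End LiftedWeights.

Theorem lemma4p4 (R : realType) (T : finType) (N : {set T}) (p : T)
    (C1 C2 : {set {set T}}) (lam1 lam2 : {set T} -> R)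
    (I : {set 'I_#|C1 :|: C2|}) :
  N != set0 -> p \notin N ->
  minimal_balanced R N C1 -> minimal_balanced R N C2 -> C1 != C2 ->
  balancing_weights N C1 lam1 -> balancing_weights N C2 lam2 ->
  \rank (char_matrix R N (C1 :|: C2)) = (#|C1 :|: C2| - 1)%N ->
  let S := fun i : 'I_#|C1 :|: C2| => enum_val (A := mem (C1 :|: C2)) i in
  let mu := fun X : {set T} => if X \in C1 then lam1 X else 0 in
  let nu := fun X : {set T} => if X \in C2 then lam2 X else 0 in
  let muI := \sum_(i in I) mu (S i) in
  let nuI := \sum_(i in I) nu (S i) in
  muI != nuI ->
  let t := (1 - muI) / (nuI - muI) in
  0 < t < 1 ->
  let S' := fun i : 'I_#|C1 :|: C2| => if i \in I then p |: S i else S i in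
  let C' := [set S' i | i : 'I_#|C1 :|: C2|] in
  minimal_balanced R (p |: N) C' /\
  exists w : {set T} -> R, balancing_weights (p |: N) C' w /\
    forall i, w (S' i) = (1 - t) * mu (S i) + t * nu (S i).
Proof.
move=> _ pN [[colC1 _] _] [[colC2 _] _] _ [lam1_gt0 bal1] [lam2_gt0 bal2] rkC.
move=> S mu nu muI nuI muI_neq_nuI t t_01 S' C'.
have colS i : S i != set0 /\ S i \subset N.
  by have /setUP[/colC1|/colC2] := enum_valP i.
have S_sub_N i : S i \subset N by case: (colS i).
have pS i : p \notin S i by apply: contra pN; apply/subsetP.
have S'_inj : injective S' := adjoin_point_inj pS enum_val_inj.
have mu_bal := balances_enum_zero_extension (subsetUl C1 C2) bal1.
have nu_bal := balances_enum_zero_extension (subsetUr C1 C2) bal2.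
have v_gt0 i : 0 < (1 - t) * mu (S i) + t * nu (S i).
  exact: mix_zero_extensions_gt0 lam1_gt0 lam2_gt0 t_01 (enum_valP i).
have [w [w_bal w_S']] := weights_of_injective S'_inj v_gt0
  (lifted_balances (I := I) pN S_sub_N mu_bal nu_bal muI_neq_nuI).
split; last by exists w.
apply: (minimal_balanced_of_unique_weights _ w_bal).
  exact: collection_on_adjoin_point.
move=> lam lam_bal _ /imsetP[i _ ->]; rewrite w_S'.
apply: (lifted_balances_unique (I := I) (r := lam \o S') pN S_sub_N mu_bal nu_bal
  muI_neq_nuI rkC) => x.
by rewrite -lam_bal big_imset //= => a b _ _; apply: S'_inj.
Qed.
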